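(* Let $P$ be a saturated toric sharp monoid, let $v_1,\dots,v_d$ be the first lattice points on the $d$ extremal rays of the dual cone $C(P)^{\vee}$, let $F(P)$ be the free monoid on $v_1,\dots,v_d$, and let $i:P\rightarrow F(P)$ be the morphism $p\mapsto (v_1(p),\dots,v_d(p))$. Then $i$ is exact. Moreover, for any exact morphism $i':P\rightarrow F$ to a free monoid $F$ of rank $d$, there is a unique monoid morphism $j:F(P)\rightarrow F$ such that $i'=j\circ i$.
   Context: A saturated toric sharp monoid is a finitely generated, integral, saturated monoid $P$ with no nontrivial units and with $P^{gp}$ torsion-free. $C(P)$ denotes the rational polyhedral cone generated by $P$ in $P^{gp}\otimes\mathbb{Q}$, and $C(P)^{\vee}\subset \mathrm{Hom}(P^{gp},\mathbb{Q})$ its dual cone; lattice points of $C(P)^{\vee}$ are elements of $\mathrm{Hom}(P^{gp},\mathbb{Z})$ lying in it. A morphism $f:P\rightarrow Q$ of integral monoids is exact if the square formed by $f$, $f^{gp}:P^{gp}\to Q^{gp}$ and the inclusions $P\to P^{gp}$, $Q\to Q^{gp}$ is cartesian as a diagram of sets, i.e. $P=(f^{gp})^{-1}(Q)$. *)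

From mathcomp Require Import all_boot all_order all_algebra.
Set Implicit Arguments. Unset Strict Implicit. Unset Printing Implicit Defensive.
Import Order.TTheory GRing.Theory Num.Theory.
Local Open Scope ring_scope.

(* A saturated toric sharp monoid is modelled (up to isomorphism) as a
   submonoid P of the lattice Z^n = 'cV[int]_n with P^gp = Z^n. *)

Definition toric_sharp_saturated (n : nat) (P : 'cV[int]_n -> Prop) : Prop :=
  [/\ P 0 /\ (forall a b, P a -> P b -> P (a + b)),
      (exists (m : nat) (g : 'I_m -> 'cV[int]_n),
          (forall k, P (g k)) /\
          forall x, P x -> exists c : 'I_m -> nat, x = \sum_(k < m) g k *+ c k),
      (forall (x : 'cV[int]_n) (m : nat), (0 < m)%N -> P (x *+ m) -> P x),
      (forall x, P x -> P (- x) -> x = 0) &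
      (* P^gp is the whole lattice Z^n (hence torsion free) *)
      (forall x, exists a b, [/\ P a, P b & x = a - b])].

Definition dpair (n : nat) (u : 'cV[rat]_n) (x : 'cV[int]_n) : rat :=
  \sum_(k < n) u k 0 * (x k 0)%:~R.

Definition toQ (n : nat) (v : 'cV[int]_n) : 'cV[rat]_n := map_mx intr v.

Definition in_dual (n : nat) (P : 'cV[int]_n -> Prop) (u : 'cV[rat]_n) : Prop :=
  forall x, P x -> 0 <= dpair u x.

Definition extremal_ray (n : nat) (P : 'cV[int]_n -> Prop) (u : 'cV[rat]_n) : Prop :=
  [/\ u != 0, in_dual P u &
      forall a b, in_dual P a -> in_dual P b -> a + b = u ->
        exists c : rat, 0 <= c /\ a = c *: u].

Definition first_lattice_point (n : nat) (P : 'cV[int]_n -> Prop)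
    (v : 'cV[int]_n) : Prop :=
  extremal_ray P (toQ v) /\
  forall c : rat, 0 < c -> (exists w : 'cV[int]_n, toQ w = c *: toQ v) -> 1 <= c.

(* monoid morphism P -> N^d (only values on P matter) *)
Definition monoid_mor (n d : nat) (P : 'cV[int]_n -> Prop)
    (f : 'cV[int]_n -> 'cV[nat]_d) : Prop :=
  f 0 = 0 /\ forall a b, P a -> P b -> f (a + b) = f a + f b.

(* exactness: P = (f^gp)^{-1}(N^d), where P^gp = {a - b} and
   f^gp (a - b) = f a - f b *)
Definition exact_mor (n d : nat) (P : 'cV[int]_n -> Prop)
    (f : 'cV[int]_n -> 'cV[nat]_d) : Prop :=
  forall a b, P a -> P b -> (forall k, f b k ord0 <= f a k ord0)%N -> P (a - b).

Definition free_mor (d e : nat) (j : 'cV[nat]_d -> 'cV[nat]_e) : Prop :=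
  j 0 = 0 /\ forall x y, j (x + y) = j x + j y.

Definition canon_map (n d : nat) (v : 'I_d -> 'cV[int]_n) (p : 'cV[int]_n)
  : 'cV[nat]_d :=
  \col_(k < d) absz (\sum_(l < n) v k l 0 * p l 0).

(* Since P^gp = Z^n, the dual cone C(P)^vee is pointed, so by Minkowski's theorem it
   is generated by its extremal rays, i.e. by v_1, ..., v_d.  Farkas' lemma then puts
   every x with v_k(x) >= 0 for all k in the rational cone of P, and saturation puts
   it in P: P = {x | v_k(x) >= 0 for all k}, which is the exactness of i.
   Conversely, the coordinates of an exact i' : P -> N^d extend to functionals
   w_1, ..., w_d on Z^n which cut out P in the same way, so by Farkas they generate
   C(P)^vee.  Each extremal ray is then spanned by some w_m; as there are d of each,
   w_m = N_m v_tau(m) for a permutation tau and positive integers N_m, so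
   j(y) = (N_m y_tau(m))_m.  Any other factorization j' gives
   w_m = sum_k j'(e_k)_m v_k, which extremality of v_tau(m) forces to be j. *)

From mathcomp Require Import all_boot all_order all_algebra.
From mathcomp Require Import ring lra.
From Stdlib Require Classical_Prop ClassicalEpsilon.
Import Order.TTheory GRing.Theory Num.Theory.
Set Implicit Arguments. Unset Strict Implicit.
Local Open Scope ring_scope.

Definition dot n (u x : 'cV[rat]_n) : rat := \sum_k u k 0 * x k 0.

Section Dot.
Variable n : nat.
Implicit Types u v x y : 'cV[rat]_n.

Lemma dotDl u v x : dot (u + v) x = dot u x + dot v x.
Proof. by rewrite /dot -big_split; apply: eq_bigr => k _; rewrite mxE mulrDl. Qed.
Lemma dotDr u x y : dot u (x + y) = dot u x + dot u y.
Proof. by rewrite /dot -big_split; apply: eq_bigr => k _; rewrite mxE mulrDr. Qed.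
Lemma dotZl c u x : dot (c *: u) x = c * dot u x.
Proof. by rewrite /dot mulr_sumr; apply: eq_bigr => k _; rewrite mxE mulrA. Qed.
Lemma dotZr c u x : dot u (c *: x) = c * dot u x.
Proof. by rewrite /dot mulr_sumr; apply: eq_bigr => k _; rewrite mxE mulrCA. Qed.
Lemma dotNl u x : dot (- u) x = - dot u x.
Proof. by rewrite -scaleN1r dotZl mulN1r. Qed.
Lemma dotNr u x : dot u (- x) = - dot u x.
Proof. by rewrite -scaleN1r dotZr mulN1r. Qed.
Lemma dotBl u v x : dot (u - v) x = dot u x - dot v x.
Proof. by rewrite dotDl dotNl. Qed.
Lemma dotBr u x y : dot u (x - y) = dot u x - dot u y.
Proof. by rewrite dotDr dotNr. Qed.
Lemma dot0l x : dot 0 x = 0.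
Proof. by rewrite -(scale0r (0 : 'cV[rat]_n)) dotZl mul0r. Qed.
Lemma dot0r x : dot x 0 = 0.
Proof. by rewrite -(scale0r (0 : 'cV[rat]_n)) dotZr mul0r. Qed.
Lemma dotC u x : dot u x = dot x u.
Proof. by apply: eq_bigr => k _; rewrite mulrC. Qed.
Lemma dot_suml (I : Type) (r : seq I) (Q : pred I) (F : I -> 'cV[rat]_n) x :
  dot (\sum_(i <- r | Q i) F i) x = \sum_(i <- r | Q i) dot (F i) x.
Proof. by apply: (big_morph (fun u => dot u x)) => [u v|]; rewrite ?dotDl ?dot0l. Qed.
Lemma dot_sumr (I : Type) (r : seq I) (Q : pred I) u (F : I -> 'cV[rat]_n) :
  dot u (\sum_(i <- r | Q i) F i) = \sum_(i <- r | Q i) dot u (F i).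
Proof. by apply: (big_morph (dot u)) => [x y|]; rewrite ?dotDr ?dot0r. Qed.

Lemma dot_gt0 x : x != 0 -> 0 < dot x x.
Proof.
move=> x_neq0; have sq_ge0 k : 0 <= x k 0 * x k 0 by rewrite -expr2 sqr_ge0.
rewrite lt_def sumr_ge0 // andbT; apply: contra x_neq0.
rewrite psumr_eq0 // => /allP x0; apply/eqP/matrixP => i j; rewrite (ord1 j) mxE.
by move: (x0 i (mem_index_enum i)); rewrite mulf_eq0 orbb => /eqP.
Qed.
End Dot.

Definition in_cone n m (g : 'I_m -> 'cV[rat]_n) (x : 'cV[rat]_n) : Prop :=
  exists2 c : 'I_m -> rat, (forall k, 0 <= c k) & x = \sum_k c k *: g k.

Definition in_dual_cone n m (g : 'I_m -> 'cV[rat]_n) (u : 'cV[rat]_n) : Prop :=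
  forall k, 0 <= dot u (g k).

Lemma in_cone_recl n m (g : 'I_m.+1 -> 'cV[rat]_n) c y :
  0 <= c -> in_cone (fun k => g (lift ord0 k)) y -> in_cone g (c *: g ord0 + y).
Proof.
move=> c_ge0 [c' c'_ge0 ->].
exists (fun k => if unlift ord0 k is Some k' then c' k' else c).
  by move=> k; case: unlift.
by rewrite big_ord_recl unlift_none; congr (_ + _); apply: eq_bigr => k _; rewrite liftK.
Qed.

Lemma in_dual_cone_recl n m (g : 'I_m.+1 -> 'cV[rat]_n) u :
  0 <= dot u (g ord0) -> in_dual_cone (fun k => g (lift ord0 k)) u -> in_dual_cone g u.
Proof. by move=> u0 u_lift k; case: (unliftP ord0 k) => [k'|] ->. Qed.

Lemma farkas n m (g : 'I_m -> 'cV[rat]_n) x :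
  ~ in_cone g x -> exists u, in_dual_cone g u /\ dot u x < 0.
Proof.
elim: m g x => [|m IH] g x x_notin.
  exists (- x); split; first by case.
  rewrite dotNl oppr_lt0 dot_gt0 //; apply/eqP => x0; apply: x_notin.
  by exists (fun=> 0) => //; rewrite big_ord0.
set g0 := g ord0; set g' := fun k => g (lift ord0 k).
have x_notin' : ~ in_cone g' x.
  by move=> x_in; apply: x_notin; rewrite -[x]add0r -(scale0r g0); apply: in_cone_recl.
have [u [u_ge0 ux_lt0]] := IH g' x x_notin'.
have [ug0_ge0 | a_lt0] := lerP 0 (dot u g0).
  by exists u; split => //; apply: in_dual_cone_recl.
set a := dot u g0 in a_lt0.
(* Fourier--Motzkin: project the generators along g0 onto the hyperplane u = 0. *)
pose h k := g' k - (dot u (g' k) / a) *: g0.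
pose x' := x - (dot u x / a) *: g0.
have x'_notin : ~ in_cone h x'.
  move=> [c c_ge0 Ex']; apply: x_notin.
  have -> : x = (dot u x / a - \sum_k c k * (dot u (g' k) / a)) *: g0
                + \sum_k c k *: g' k.
    rewrite -{1}[x](subrK ((dot u x / a) *: g0)) -/x' Ex' /h.
    under eq_bigr do rewrite scalerBr scalerA.
    by rewrite sumrB scalerBl scaler_suml addrAC [RHS]addrAC (addrC (dot u x / a *: g0)).
  apply: (in_cone_recl (g := g)); last by exists c.
  rewrite subr_ge0; apply: le_trans (_ : 0 <= _); last by rewrite ltW // nmulr_rgt0 ?invr_lt0.
  rewrite sumr_le0 // => k _; rewrite mulr_ge0_le0 // mulr_ge0_le0 //.
  by rewrite ltW // invr_lt0.
have [u' [u'_ge0 u'x_lt0]] := IH h x' x'_notin.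
have swap y : dot u' g0 / a * dot u y = dot u y / a * dot u' g0.
  by rewrite mulrAC -mulrA mulrC.
exists (u' - (dot u' g0 / a) *: u); split.
  apply: in_dual_cone_recl => [|k]; rewrite dotBl dotZl swap.
    by rewrite -/a divff ?mul1r ?subrr // lt_eqF.
  by have := u'_ge0 k; rewrite /h dotBr dotZr.
by rewrite dotBl dotZl swap; move: u'x_lt0; rewrite /x' dotBr dotZr.
Qed.

Lemma in_cone_of_dual_ge0 n m (g : 'I_m -> 'cV[rat]_n) x :
  (forall u, in_dual_cone g u -> 0 <= dot u x) -> in_cone g x.
Proof.
move=> x_ge0; apply: Classical_Prop.NNPP => /farkas [u [u_ge0 ux_lt0]].
by have := x_ge0 u u_ge0; rewrite leNgt ux_lt0.
Qed.

Section ExtremalRays.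
Variables (n m : nat) (g : 'I_m -> 'cV[rat]_n).

Definition support (u : 'cV[rat]_n) : {set 'I_m} := [set k | dot u (g k) != 0].

Definition extremal (u : 'cV[rat]_n) : Prop :=
  [/\ u != 0, in_dual_cone g u &
      forall a b, in_dual_cone g a -> in_dual_cone g b -> a + b = u ->
        exists c, 0 <= c /\ a = c *: u].

Hypothesis pointed : forall u, in_dual_cone g u -> in_dual_cone g (- u) -> u = 0.

Lemma not_in_dual_cone u : ~ in_dual_cone g u -> exists k, dot u (g k) < 0.
Proof.
move=> not_Du; apply/existsP/negbNE/negP; rewrite negb_exists => /forallP u_ge0.
by apply: not_Du => k; rewrite leNgt u_ge0.
Qed.

Lemma support_subP w u :
  reflect (forall k, dot u (g k) = 0 -> dot w (g k) = 0) (support w \subset support u).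
Proof.
apply: (iffP subsetP) => [w_u k|w_u k]; last first.
  by rewrite !inE; apply: contraNN => /eqP /w_u ->.
move=> uk0; apply/eqP; apply: contraT => wk.
by have := w_u k; rewrite !inE wk uk0 eqxx => /(_ isT).
Qed.

Lemma supportN u : support (- u) = support u.
Proof. by apply/setP => k; rewrite !inE dotNl oppr_eq0. Qed.

Lemma support_neq0 u : in_dual_cone g u -> u != 0 -> exists k, 0 < dot u (g k).
Proof.
move=> Du u_neq0; apply: Classical_Prop.NNPP => no_k; case/eqP: u_neq0.
apply: pointed => // k; rewrite dotNl oppr_ge0 leNgt.
by apply/negP => uk_gt0; apply: no_k; exists k.
Qed.

(* Move from u along w until the first constraint becomes tight: the step t is
   the least ratio dot u (g k) / - dot w (g k) over the k where w decreases. *)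
Lemma move_to_face u w k1 :
  in_dual_cone g u -> support w \subset support u -> dot w (g k1) < 0 ->
  exists t : rat, [/\ 0 < t, in_dual_cone g (u + t *: w) &
                      (#|support (u + t *: w)| < #|support u|)%N].
Proof.
move=> Du /support_subP w_u wk1_lt0.
pose ratio k := dot u (g k) / - dot w (g k).
case: (@arg_minP _ _ _ k1 (fun k => dot w (g k) < 0) ratio) => // ks wks_lt0 ks_min.
have uks_gt0 : 0 < dot u (g ks).
  by rewrite lt_def Du andbT; apply: contraTneq wks_lt0 => /w_u ->; rewrite ltxx.
have wks_neg : 0 < - dot w (g ks) by rewrite oppr_gt0.
have uwks0 : dot (u + ratio ks *: w) (g ks) = 0.
  by rewrite dotDl dotZl /ratio; field; rewrite lt_eqF.
exists (ratio ks); split; first by rewrite divr_gt0.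
- move=> k; rewrite dotDl dotZl.
  have [wk_ge0|wk_lt0] := leP 0 (dot w (g k)).
    by rewrite addr_ge0 // mulr_ge0 // ltW // divr_gt0.
  have := ks_min k wk_lt0; rewrite /ratio ler_pdivlMr ?oppr_gt0 //.
  by rewrite mulrN -subr_ge0 opprK.
apply: proper_card; apply/properP; split.
  by apply/support_subP => k uk0; rewrite dotDl dotZl uk0 (w_u k uk0) mulr0 addr0.
by exists ks; rewrite !inE ?uwks0 ?eqxx // gt_eqF.
Qed.

Lemma face_direction u :
  in_dual_cone g u -> u != 0 -> ~ extremal u ->
  exists w, w != 0 /\ support w \proper support u.
Proof.
move=> Du u_neq0 not_ext; have [k0 uk0_gt0] := support_neq0 Du u_neq0.
have uk0_neq0 : dot u (g k0) != 0 by rewrite gt_eqF.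
have [w1 [/support_subP w1_u w1_indep]] :
    exists w1, support w1 \subset support u /\ forall c, w1 <> c *: u.
  apply: Classical_Prop.NNPP => no_w1; apply: not_ext; split => // a b Da Db ab_u.
  have a_u : support a \subset support u.
    apply/support_subP => k; rewrite -ab_u dotDl.
    by have := Da k; have := Db k; lra.
  have [c a_cu] : exists c, a = c *: u.
    apply: Classical_Prop.NNPP => no_c; apply: no_w1; exists a.
    by split => // c a_cu; apply: no_c; exists c.
  exists c; split => //.
  by have := Da k0; rewrite a_cu dotZl pmulr_lge0.
pose w := dot u (g k0) *: w1 - dot w1 (g k0) *: u.
have wk0 : dot w (g k0) = 0 by rewrite dotBl !dotZl mulrC subrr.
exists w; split.
  apply: contra_notN (w1_indep (dot w1 (g k0) / dot u (g k0))) => /eqP w0.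
  apply: (scalerI uk0_neq0); rewrite scalerA mulrCA divff // mulr1.
  by apply/eqP; rewrite -subr_eq0 -/w w0.
apply/properP; split.
  by apply/support_subP => k uk0; rewrite dotBl !dotZl uk0 (w1_u k uk0) !mulr0 subrr.
by exists k0; rewrite !inE ?wk0 ?eqxx.
Qed.

(* Induction on the number of constraints that are not tight at u;
   a non-extremal u is moved in both directions along its face until a new
   constraint becomes tight. *)
Lemma dual_cone_ge0 x :
  (forall u, extremal u -> 0 <= dot u x) -> forall u, in_dual_cone g u -> 0 <= dot u x.
Proof.
move=> x_ext u; have [k] := ubnP #|support u|.
elim: k u => // k IH u /ltnSE supp_u Du.
have [->|u_neq0] := eqVneq u 0; first by rewrite dot0l.
have [/x_ext //|not_ext] := Classical_Prop.classic (extremal u).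
have [w [w_neq0 w_face]] := face_direction Du u_neq0 not_ext.
have IH_face s : support s \proper support u -> in_dual_cone g s -> 0 <= dot s x.
  by move=> /proper_card s_u; apply: IH; apply: leq_trans s_u supp_u.
have IH_move s : support s \proper support u -> ~ in_dual_cone g s ->
    exists2 t, 0 < t & 0 <= dot u x + t * dot s x.
  move=> /proper_sub s_face /not_in_dual_cone [k1 sk1_lt0].
  have [t [t_gt0 Dut ut_u]] := move_to_face Du s_face sk1_lt0.
  by exists t => //; rewrite -dotZl -dotDl; apply: IH; first exact: leq_trans ut_u supp_u.
have wN_face : support (- w) \proper support u by rewrite supportN.
have [Dw|not_Dw] := Classical_Prop.classic (in_dual_cone g w);
  have [DNw|not_DNw] := Classical_Prop.classic (in_dual_cone g (- w)).
- by case/eqP: w_neq0; apply: pointed.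
- have := IH_face w w_face Dw; have [t t_gt0] := IH_move _ wN_face not_DNw.
  by rewrite dotNl; nra.
- have := IH_face _ wN_face DNw; have [t t_gt0] := IH_move _ w_face not_Dw.
  by rewrite dotNl; nra.
have [t1 t1_gt0] := IH_move _ w_face not_Dw; have [t2 t2_gt0] := IH_move _ wN_face not_DNw.
by rewrite dotNl; nra.
Qed.

End ExtremalRays.

Section Lattice.
Variable n : nat.
Implicit Types (a b w x : 'cV[int]_n) (u : 'cV[rat]_n).

Lemma toQB a b : toQ (a - b) = toQ a - toQ b. Proof. exact: map_mxB. Qed.
Lemma toQMn a k : toQ (a *+ k) = toQ a *+ k.
Proof. by apply/matrixP => i j; rewrite !(mxE, mulmxnE) rmorphMn. Qed.
Lemma toQMz a z : toQ (a *~ z) = z%:~R *: toQ a.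
Proof. by rewrite -scaler_int; apply/matrixP => i j; rewrite !mxE rmorphM intz. Qed.
Lemma toQ_sum m (F : 'I_m -> 'cV[int]_n) : toQ (\sum_k F k) = \sum_k toQ (F k).
Proof. exact: map_mx_sum. Qed.

Lemma toQ_inj : injective (@toQ n).
Proof.
move=> a b /matrixP ab; apply/matrixP => i j.
by have := ab i j; rewrite !mxE => /intr_inj.
Qed.

Definition ip (w x : 'cV[int]_n) : int := \sum_l w l 0 * x l 0.

Lemma ipD w a b : ip w (a + b) = ip w a + ip w b.
Proof. by rewrite /ip -big_split; apply: eq_bigr => l _; rewrite mxE mulrDr. Qed.
Lemma ipB w a b : ip w (a - b) = ip w a - ip w b.
Proof.
by rewrite /ip -sumrB; apply: eq_bigr => l _; rewrite !mxE mulrBr.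
Qed.
Lemma ipMnl w x k : ip (w *+ k) x = ip w x *+ k.
Proof. by rewrite /ip -sumrMnl; apply: eq_bigr => l _; rewrite mulmxnE mulrnAl. Qed.
Lemma ip0 w : ip w 0 = 0.
Proof. by rewrite /ip big1 // => l _; rewrite mxE mulr0. Qed.
Lemma ip_sumMnl d (v : 'I_d -> 'cV[int]_n) (u : 'I_d -> nat) p :
  ip (\sum_k v k *+ u k) p = \sum_k ip (v k) p *+ u k.
Proof.
rewrite /ip; under eq_bigr do rewrite summxE mulr_suml.
rewrite exchange_big; apply: eq_bigr => k _; rewrite -sumrMnl.
by apply: eq_bigr => l _; rewrite mulmxnE mulrnAl.
Qed.

Lemma dpair_dot u x : dpair u x = dot u (toQ x).
Proof. by apply: eq_bigr => k _; rewrite mxE. Qed.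

Lemma dot_toQ w x : dot (toQ w) (toQ x) = (ip w x)%:~R.
Proof. by rewrite /dot /ip rmorph_sum; apply: eq_bigr => l _; rewrite !mxE rmorphM. Qed.

Lemma dpair_toQ w x : dpair (toQ w) x = (ip w x)%:~R.
Proof. by rewrite dpair_dot dot_toQ. Qed.

Lemma additive_ip (f : 'cV[int]_n -> int) :
  (forall a b, f (a + b) = f a + f b) ->
  forall x, f x = ip (\col_l f (delta_mx l 0)) x.
Proof.
move=> fD; have f0 : f 0 = 0 by apply: (addrI (f 0)); rewrite -fD !addr0.
have fMn a k : f (a *+ k) = f a *+ k.
  by elim: k => [|k IH]; rewrite ?mulr0n // !mulrS fD IH.
have fN a : f (- a) = - f a by apply/eqP; rewrite -subr_eq0 opprK -fD addNr f0.
have fMz a z : f (a *~ z) = f a * z.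
  case: z => k; first by rewrite -pmulrn fMn -mulr_natr natz.
  by rewrite NegzE mulrNz fN -pmulrn fMn mulrN -mulr_natr natz.
move=> x; rewrite {1}[x]matrix_sum_delta (big_morph f fD f0) /ip.
by apply: eq_bigr => l _; rewrite big_ord1 -[X in X *: _]intz scaler_int fMz mxE mulrC.
Qed.

End Lattice.

Lemma common_denominator m (c : 'I_m -> rat) :
  exists2 M : nat, (0 < M)%N & forall k, c k *+ M \is a Num.int.
Proof.
exists (\prod_k `|denq (c k)|%N).
  by rewrite prodn_gt0 // => k; rewrite absz_gt0 denq_neq0.
move=> k; rewrite (bigD1 k) //= mulrnA rpredMn //.
by rewrite -mulr_natr natr_absz normr_denq -numqE intr_int.
Qed.

Lemma scale_to_lattice n (u : 'cV[rat]_n) :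
  exists2 M : nat, (0 < M)%N & exists z : 'cV[int]_n, toQ z = u *+ M.
Proof.
have [M M_gt0 uM_int] := common_denominator (fun k => u k 0).
exists M => //; exists (\col_k Num.floor (u k 0 *+ M)).
by apply/matrixP => i j; rewrite (ord1 j) !(mxE, mulmxnE) floorK.
Qed.

Lemma in_cone_lattice n (P : 'cV[int]_n -> Prop) m (g : 'I_m -> 'cV[int]_n) x :
  P 0 -> (forall a b, P a -> P b -> P (a + b)) -> (forall k, P (g k)) ->
  in_cone (fun k => toQ (g k)) x ->
  exists2 M : nat, (0 < M)%N & exists2 z, P z & toQ z = x *+ M.
Proof.
move=> P0 PD Pg [c c_ge0 ->]; have [M M_gt0 cM_int] := common_denominator c.
have [z cM_z] : exists z : 'I_m -> nat, forall k, c k *+ M = (z k)%:R.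
  apply: (@fin_all_exists _ (fun=> nat) (fun k z => c k *+ M = z%:R)) => k.
  by apply/natrP; rewrite natrEint cM_int mulrn_wge0.
have PMn a k : P a -> P (a *+ k) by move=> Pa; elim: k => [|k IH]; rewrite ?mulrS; auto.
exists M => //; exists (\sum_k g k *+ z k); first by elim/big_ind: _ => //; auto.
rewrite toQ_sum -sumrMnl; apply: eq_bigr => k _.
by rewrite toQMn -[RHS]scaler_nat scalerA mulr_natl cM_z scaler_nat.
Qed.

Lemma dot_toQ_delta n (u : 'cV[rat]_n) k : dot u (toQ (delta_mx k 0)) = u k 0.
Proof.
rewrite /dot (bigD1 k) //= big1 ?addr0 => [|l l_k]; first by rewrite !mxE !eqxx mulr1.
by rewrite !mxE (negbTE l_k) mulr0.
Qed.

Definition cut_out_by n (P : 'cV[int]_n -> Prop) d (w : 'I_d -> 'cV[int]_n) : Prop :=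
  forall x, P x <-> forall k, 0 <= ip (w k) x.

Lemma canon_mapE n d (v : 'I_d -> 'cV[int]_n) p k :
  canon_map v p k 0 = `|ip (v k) p|%N.
Proof. by rewrite mxE. Qed.

Definition free_map d (tau : 'I_d -> 'I_d) (N : 'I_d -> nat) (y : 'cV[nat]_d)
  : 'cV[nat]_d := \col_m (N m * y (tau m) ord0)%N.

Lemma free_map_mor d (tau : 'I_d -> 'I_d) (N : 'I_d -> nat) : free_mor (free_map tau N).
Proof.
split=> [|x y]; apply/matrixP => m i; rewrite (ord1 i) /free_map !mxE ?muln0 //.
by rewrite mulnDr.
Qed.

Lemma free_morE d e (j : 'cV[nat]_d -> 'cV[nat]_e) :
  free_mor j -> forall y m, j y m 0 = \sum_k j (delta_mx k 0) m 0 * y k 0.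
Proof.
move=> [j0 jD] y m.
have jMn x c : j (x *+ c) = j x *+ c by elim: c => [|c IH]; rewrite ?mulr0n // !mulrS jD IH.
have yE : y = \sum_k delta_mx k 0 *+ y k 0.
  apply/matrixP => i i0; rewrite (ord1 i0) summxE (bigD1 i) //= big1 ?addr0 => [|k k_i].
    by rewrite mulmxnE !mxE !eqxx mulr1n natn.
  by rewrite mulmxnE !mxE eq_sym (negbTE k_i) mul0rn.
rewrite {1}yE (big_morph j jD j0) summxE; apply: eq_bigr => k _.
by rewrite jMn mulmxnE -mulr_natr natn.
Qed.

Section ToricMonoid.
Variables (n : nat) (P : 'cV[int]_n -> Prop).
Hypothesis HP : toric_sharp_saturated P.

Lemma P0 : P 0. Proof. by case: HP => [[]]. Qed.
Lemma PD a b : P a -> P b -> P (a + b). Proof. by case: HP => [[_ HD]] _ _ _ _; apply: HD. Qed.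
Lemma P_sat x M : (0 < M)%N -> P (x *+ M) -> P x.
Proof. by case: HP => _ _ Hsat _ _; apply: Hsat. Qed.
Lemma P_gp x : exists a b, [/\ P a, P b & x = a - b]. Proof. by case: HP => _ _ _ _. Qed.

Lemma dpairP_inj u u' : (forall p, P p -> dpair u p = dpair u' p) -> u = u'.
Proof.
move=> uu'; apply/matrixP => k j; rewrite (ord1 j) -!(dot_toQ_delta _ k).
by have [a [b [Pa Pb ->]]] := P_gp (delta_mx k 0); rewrite toQB !dotBr -!dpair_dot !uu'.
Qed.

Lemma ipP_inj w w' : (forall p, P p -> ip w p = ip w' p) -> w = w'.
Proof.
by move=> ww'; apply: toQ_inj; apply: dpairP_inj => p Pp; rewrite !dpair_toQ ww'.
Qed.

Lemma in_dual_pointed u : in_dual P u -> in_dual P (- u) -> u = 0.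
Proof.
move=> Du DNu; apply: dpairP_inj => p Pp; apply/eqP.
rewrite eq_le !dpair_dot dot0l -oppr_ge0 -dotNl -!dpair_dot.
by rewrite Du ?DNu.
Qed.

Lemma in_dual_sum (I : Type) (r : seq I) (Q : pred I) (w : I -> 'cV[rat]_n) :
  (forall i, Q i -> in_dual P (w i)) -> in_dual P (\sum_(i <- r | Q i) w i).
Proof.
move=> Dw p Pp; rewrite dpair_dot dot_suml sumr_ge0 // => i Qi.
by rewrite -dpair_dot Dw.
Qed.

Lemma in_dualZ c u : 0 <= c -> in_dual P u -> in_dual P (c *: u).
Proof. by move=> c_ge0 Du p Pp; rewrite dpair_dot dotZl -dpair_dot mulr_ge0 ?Du. Qed.

Lemma dual_cone_generators : exists m (g : 'I_m -> 'cV[int]_n),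
  (forall k, P (g k)) /\ forall u, in_dual P u <-> in_dual_cone (fun k => toQ (g k)) u.
Proof.
case: HP => _ [m [g [Pg g_gen]]] _ _ _; exists m, g; split=> // u; split.
  by move=> Du k; rewrite -dpair_dot Du.
move=> Du x /g_gen [c ->]; rewrite dpair_dot toQ_sum dot_sumr sumr_ge0 // => k _.
by rewrite toQMn -scaler_nat dotZr mulr_ge0.
Qed.

Lemma extremal_rayE m (g : 'I_m -> 'cV[rat]_n) :
  (forall u, in_dual P u <-> in_dual_cone g u) ->
  forall u, extremal_ray P u <-> extremal g u.
Proof.
move=> DE u; split=> [[u_neq0 /DE Du u_ext]|[u_neq0 /DE Du u_ext]]; split=> // a b.
  by move=> /DE Da /DE Db; apply: u_ext.
by move=> /DE Da /DE Db; apply: u_ext.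
Qed.

Lemma mem_of_in_cone m (g : 'I_m -> 'cV[int]_n) x :
  (forall k, P (g k)) -> in_cone (fun k => toQ (g k)) (toQ x) -> P x.
Proof.
move=> Pg /(in_cone_lattice P0 PD Pg) [M M_gt0 [z Pz zE]].
apply: (P_sat M_gt0); suff <- : z = x *+ M by [].
by apply: toQ_inj; rewrite zE toQMn.
Qed.

Lemma first_lattice_points_cut_out d (v : 'I_d -> 'cV[int]_n) :
  (forall k, first_lattice_point P (v k)) ->
  (forall u, extremal_ray P u -> exists k (c : rat), 0 < c /\ u = c *: toQ (v k)) ->
  cut_out_by P v.
Proof.
move=> Hv Hall x; split=> [Px k|v_ge0].
  by have [[_ Dv _] _] := Hv k; have := Dv x Px; rewrite dpair_toQ ler0z.
have [m [g [Pg DE]]] := dual_cone_generators.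
apply: (mem_of_in_cone Pg); apply: in_cone_of_dual_ge0.
apply: dual_cone_ge0 => [u Du DNu|u /(extremal_rayE DE u) /Hall [k [c [c_gt0 ->]]]].
  by apply: in_dual_pointed; apply/DE.
by rewrite dotZl dot_toQ mulr_ge0 ?ler0z // ltW.
Qed.

Lemma canon_map_monoid_mor d (v : 'I_d -> 'cV[int]_n) :
  cut_out_by P v -> monoid_mor P (canon_map v).
Proof.
move=> v_cut; split=> [|a b Pa Pb]; apply/matrixP => k j.
  by rewrite (ord1 j) canon_mapE ip0 mxE.
rewrite (ord1 j) [RHS]mxE !canon_mapE; have /v_cut/(_ k) := Pa; have /v_cut/(_ k) := Pb.
by rewrite ipD; case: (ip _ a) => // ?; case: (ip _ b).
Qed.

Lemma canon_map_exact d (v : 'I_d -> 'cV[int]_n) :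
  cut_out_by P v -> exact_mor P (canon_map v).
Proof.
move=> v_cut a b Pa Pb ab; apply/v_cut => k; rewrite ipB subr_ge0.
have := ab k; rewrite !canon_mapE.
have /v_cut/(_ k) := Pa; have /v_cut/(_ k) := Pb.
by case: (ip _ a) => // ?; case: (ip _ b).
Qed.

Lemma additive_extension (f : 'cV[int]_n -> int) :
  (forall a b, P a -> P b -> f (a + b) = f a + f b) ->
  exists w, forall p, P p -> f p = ip w p.
Proof.
move=> fD.
have [] := ClassicalEpsilon.choice (fun x ab => [/\ P ab.1, P ab.2 & x = ab.1 - ab.2]).
  by move=> x; have [a [b abx]] := P_gp x; exists (a, b).
move=> ab abP; pose F x := f (ab x).1 - f (ab x).2.
have FB a b : P a -> P b -> F (a - b) = f a - f b.
  move=> Pa Pb; case: (abP (a - b)) => P1 P2 ab_ab.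
  have : (ab (a - b)).1 + b = a + (ab (a - b)).2.
    by rewrite -(subrK (ab (a - b)).2 (ab (a - b)).1) -ab_ab addrAC subrK.
  by move=> /(congr1 f); rewrite !fD // /F; lra.
have FD x y : F (x + y) = F x + F y.
  have [Px1 Px2 ->] := abP x; have [Py1 Py2 ->] := abP y.
  have P1 := PD Px1 Py1; have P2 := PD Px2 Py2.
  by rewrite addrACA -opprD !FB // !fD //; lra.
have P0' := P0; have f0 : f 0 = 0 by apply: (addrI (f 0)); rewrite -fD ?addr0.
exists (\col_l F (delta_mx l 0)) => p Pp.
by rewrite -additive_ip // -[in RHS](subr0 p) FB // f0 subr0.
Qed.

Lemma exact_cut_out d (i' : 'cV[int]_n -> 'cV[nat]_d) :
  monoid_mor P i' -> exact_mor P i' ->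
  exists W : 'I_d -> 'cV[int]_n,
    (forall m p, P p -> (i' p m 0)%:Z = ip (W m) p) /\ cut_out_by P W.
Proof.
move=> [_ i'D] i'_exact.
have [W i'W] : exists W : 'I_d -> 'cV[int]_n,
    forall m p, P p -> (i' p m 0)%:Z = ip (W m) p.
  apply: (@fin_all_exists _ (fun=> 'cV[int]_n)
            (fun m w => forall p, P p -> (i' p m 0)%:Z = ip w p)) => m.
  by apply: additive_extension => a b Pa Pb; rewrite i'D // mxE PoszD.
exists W; split => // x; split => [Px m|W_ge0]; first by rewrite -i'W.
have [a [b [Pa Pb xE]]] := P_gp x; rewrite xE in W_ge0 *.
apply: i'_exact => // m.
by have := W_ge0 m; rewrite ipB -!i'W // subr_ge0 lez_nat.
Qed.

Lemma in_cone_of_cut_out d (w : 'I_d -> 'cV[int]_n) u :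
  cut_out_by P w -> in_dual P u -> in_cone (fun k => toQ (w k)) u.
Proof.
move=> w_cut Du; apply: in_cone_of_dual_ge0 => y y_ge0.
have [M M_gt0 [z zE]] := scale_to_lattice y.
have Pz : P z.
  apply/w_cut => k; rewrite -(ler0z rat) -dot_toQ zE -scaler_nat dotZr mulr_ge0 //.
  by rewrite dotC.
have := Du z Pz; rewrite dpair_dot zE -scaler_nat dotZr pmulr_rge0 ?ltr0n //.
by rewrite dotC.
Qed.

Lemma extremal_ray_summands m (w : 'I_m -> 'cV[rat]_n) u :
  extremal_ray P u -> (forall k, in_dual P (w k)) -> \sum_k w k = u ->
  forall k, exists2 c, 0 <= c & w k = c *: u.
Proof.
move=> [_ _ u_ext] Dw wu k.
have Drest : in_dual P (\sum_(l | l != k) w l) by apply: in_dual_sum.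
have wk_rest : w k + \sum_(l | l != k) w l = u by rewrite -wu [RHS](bigD1 k).
by have [c [c_ge0 ->]] := u_ext _ _ (Dw k) Drest wk_rest; exists c.
Qed.

Lemma extremal_ray_generator m (w : 'I_m -> 'cV[rat]_n) u :
  extremal_ray P u -> (forall k, in_dual P (w k)) -> in_cone w u ->
  exists k (c : rat), 0 < c /\ u = c *: w k.
Proof.
move=> u_ext Dw [c c_ge0 uE]; have [u_neq0 _ _] := u_ext.
have [lam lam_ge0 lamE] : exists2 lam : 'I_m -> rat,
    forall k, 0 <= lam k & forall k, c k *: w k = lam k *: u.
  apply: (@fin_all_exists2 _ (fun=> rat) (fun _ l => 0 <= l)
            (fun k l => c k *: w k = l *: u)).
  apply: (extremal_ray_summands (w := fun k => c k *: w k) u_ext) => [k|].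
    exact: in_dualZ.
  by rewrite uE.
case: (pickP (fun k => lam k != 0)) => [k lam_k_neq0 | lam0]; last first.
  case/eqP: u_neq0; rewrite uE big1 // => k _.
  by rewrite lamE (eqP (negbFE (lam0 k))) scale0r.
have ck_neq0 : c k != 0.
  apply: contra_neq u_neq0 => ck0; apply: (scalerI lam_k_neq0).
  by rewrite -lamE ck0 !scale0r scaler0.
exists k, (c k / lam k); split.
  by rewrite divr_gt0 // lt_def ?ck_neq0 ?lam_k_neq0 ?c_ge0 ?lam_ge0.
by rewrite mulrC -scalerA lamE scalerA mulVf ?scale1r.
Qed.

Lemma first_lattice_point_unique v v' c :
  first_lattice_point P v -> first_lattice_point P v' -> 0 < c ->
  toQ v = c *: toQ v' -> v = v'.
Proof.
move=> [_ v_min] [_ v'_min] c_gt0 vE.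
have c_ge1 : 1 <= c by apply: v'_min => //; exists v.
have cV_ge1 : 1 <= c^-1.
  apply: v_min; first by rewrite invr_gt0.
  by exists v'; rewrite vE scalerA mulVf ?scale1r // gt_eqF.
have c1 : c = 1 by apply/eqP; rewrite eq_le c_ge1 andbT -invf_ge1.
by apply: toQ_inj; rewrite vE c1 scale1r.
Qed.

Lemma first_lattice_point_multiple v w c :
  first_lattice_point P v -> 0 < c -> toQ w = c *: toQ v ->
  exists2 N : nat, (0 < N)%N & w = v *+ N.
Proof.
move=> [_ v_min] c_gt0 wE; pose z := Num.floor c; pose f := c - z%:~R.
have f_ge0 : 0 <= f by rewrite subr_ge0 floor_le.
have f_lt1 : f < 1 by rewrite ltrBlDl; have := lt_succ_floor c; rewrite intrD.
have c_int : c = z%:~R.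
  apply/eqP; rewrite -subr_eq0 -/f; apply: contraTT f_lt1 => f_neq0.
  rewrite -leNgt; apply: v_min; first by rewrite lt_def f_neq0.
  by exists (w - v *~ z); rewrite toQB wE toQMz scalerBl.
have z_gt0 : 0 < z by rewrite -(ltr0z rat) -c_int.
exists `|z|%N; first by rewrite absz_gt0 gt_eqF.
by apply: toQ_inj; rewrite wE toQMn c_int -scaler_nat natr_absz gtr0_norm.
Qed.

Section FirstLatticePoints.
Variables (d : nat) (v : 'I_d -> 'cV[int]_n).
Hypotheses (v_inj : injective v) (Hv : forall k, first_lattice_point P (v k)).

Lemma in_dual_first_lattice_point k : in_dual P (toQ (v k)).
Proof. by have [[_ Dv _] _] := Hv k. Qed.

Lemma cut_out_first_lattice_points (W : 'I_d -> 'cV[int]_n) :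
  cut_out_by P W -> exists (tau : 'I_d -> 'I_d) (N : 'I_d -> nat),
    forall m, (0 < N m)%N /\ W m = v (tau m) *+ N m.
Proof.
move=> W_cut.
have DW m : in_dual P (toQ (W m)) by move=> p /W_cut/(_ m); rewrite dpair_toQ ler0z.
have [sg sgP] : exists sg : 'I_d -> 'I_d,
    forall k, exists2 c : rat, 0 < c & toQ (v k) = c *: toQ (W (sg k)).
  apply: (@fin_all_exists _ (fun=> 'I_d)
            (fun k m => exists2 c : rat, 0 < c & toQ (v k) = c *: toQ (W m))) => k.
  have [v_ext _] := Hv k.
  have := in_cone_of_cut_out W_cut (in_dual_first_lattice_point k).
  by move=> /(extremal_ray_generator v_ext DW) [m [c [c_gt0 vE]]]; exists m, c.
have sg_inj : injective sg.
  move=> k k' sg_kk'; apply: v_inj.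
  have [c c_gt0 vk] := sgP k; have [c' c'_gt0 vk'] := sgP k'.
  apply: (first_lattice_point_unique (Hv k) (Hv k') (c := c / c')); first exact: divr_gt0.
  by rewrite vk vk' sg_kk' scalerA mulfVK // gt_eqF.
(* An injection of 'I_d into itself is onto: every W m lies on some ray. *)
pose tau := invF sg_inj.
have [N NP] : exists N : 'I_d -> nat, forall m, (0 < N m)%N /\ W m = v (tau m) *+ N m.
  apply: (@fin_all_exists _ (fun=> nat)
            (fun m N => (0 < N)%N /\ W m = v (tau m) *+ N)) => m.
  have [c c_gt0 vE] := sgP (tau m); rewrite f_invF in vE.
  have cV_gt0 : 0 < c^-1 by rewrite invr_gt0.
  have [|N N_gt0 WE] := first_lattice_point_multiple (w := W m) (Hv (tau m)) cV_gt0.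
    by rewrite vE scalerA mulVf ?scale1r // gt_eqF.
  by exists N.
by exists tau, N.
Qed.

Lemma first_lattice_points_combination (u : 'I_d -> nat) t N :
  (0 < N)%N -> \sum_k v k *+ u k = v t *+ N ->
  forall k, u k = if k == t then N else 0%N.
Proof.
move=> N_gt0 uE; have [vt_ext _] := Hv t.
have v_neq0 k : toQ (v k) != 0 by have [[] ] := Hv k.
have Nr_neq0 : (N%:R : rat) != 0 by rewrite pnatr_eq0 -lt0n.
have sumE : \sum_k ((u k)%:R / N%:R) *: toQ (v k) = toQ (v t).
  apply: (scalerI Nr_neq0); rewrite [RHS]scaler_nat -toQMn -uE toQ_sum scaler_sumr.
  by apply: eq_bigr => k _; rewrite scalerA mulrCA divff // mulr1 scaler_nat toQMn.
have u_off k : k != t -> u k = 0%N.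
  move=> k_t; apply/eqP; apply: contraNT k_t => uk_neq0; apply/eqP/v_inj.
  have uk_gt0 : (0 : rat) < (u k)%:R / N%:R by rewrite divr_gt0 // ltr0n // lt0n.
  have [|c c_ge0 ukE] := extremal_ray_summands vt_ext _ sumE k.
    by move=> l; apply: in_dualZ (in_dual_first_lattice_point l); rewrite divr_ge0.
  have c_gt0 : 0 < c.
    rewrite lt_def c_ge0 andbT; apply: contra_neq (v_neq0 k) => c0.
    by apply: (scalerI (lt0r_neq0 uk_gt0)); rewrite ukE c0 !scale0r scaler0.
  apply: (first_lattice_point_unique (Hv k) (Hv t) (divr_gt0 c_gt0 uk_gt0)).
  by rewrite mulrC -scalerA -ukE scalerA mulVf ?scale1r // gt_eqF.
move=> k; case: eqP => [->|/eqP /u_off //].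
have : \sum_k v k *+ u k = v t *+ u t.
  by rewrite (bigD1 t) //= big1 ?addr0 // => l /u_off ->.
rewrite uE => /(congr1 (@toQ n))/eqP; rewrite !toQMn -!scaler_nat -subr_eq0 -scalerBl.
by rewrite scaler_eq0 (negbTE (v_neq0 t)) orbF subr_eq0 eqr_nat eq_sym => /eqP.
Qed.

Lemma ip_first_lattice_point_ge0 k p : P p -> 0 <= ip (v k) p.
Proof. by move=> Pp; have := in_dual_first_lattice_point k Pp; rewrite dpair_toQ ler0z. Qed.

Lemma canon_map_int p k : P p -> (canon_map v p k 0)%:R = ip (v k) p.
Proof.
by move=> Pp; rewrite canon_mapE natr_absz intz ger0_norm ?ip_first_lattice_point_ge0.
Qed.

Lemma free_map_factor (W : 'I_d -> 'cV[int]_n) tau N :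
  (forall m, W m = v (tau m) *+ N m) ->
  forall p, P p -> forall m, (free_map tau N (canon_map v p) m 0)%:Z = ip (W m) p.
Proof.
move=> WE p Pp m.
by rewrite mxE -natz natrM canon_map_int // WE ipMnl mulr_natl.
Qed.

Lemma free_map_unique (W : 'I_d -> 'cV[int]_n) tau N :
  (forall m, (0 < N m)%N /\ W m = v (tau m) *+ N m) ->
  forall j, free_mor j ->
  (forall p, P p -> forall m, (j (canon_map v p) m 0)%:Z = ip (W m) p) ->
  j =1 free_map tau N.
Proof.
move=> WE j j_mor jE y; apply/matrixP => m i; rewrite (ord1 i) free_morE // mxE.
have [N_gt0 WmE] := WE m.
have Wm_sum : \sum_k v k *+ j (delta_mx k 0) m 0 = v (tau m) *+ N m.
  rewrite -WmE; apply: (ipP_inj) => p Pp; rewrite -jE // free_morE // ip_sumMnl.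
  rewrite -natz natr_sum; apply: eq_bigr => k _.
  by rewrite natrM canon_map_int // mulr_natl.
have uE := first_lattice_points_combination N_gt0 Wm_sum.
rewrite (bigD1 (tau m)) //= big1 ?addr0 => [|k k_tau]; first by rewrite uE eqxx.
by rewrite uE (negbTE k_tau).
Qed.

End FirstLatticePoints.
End ToricMonoid.

Theorem proposition2p2 (n : nat) (P : 'cV[int]_n -> Prop)
    (HP : toric_sharp_saturated P)
    (d : nat) (v : 'I_d -> 'cV[int]_n)
    (Hinj : injective v)
    (Hv : forall k, first_lattice_point P (v k))
    (Hall : forall u, extremal_ray P u ->
              exists k (c : rat), 0 < c /\ u = c *: toQ (v k)) :
  (monoid_mor P (canon_map v) /\ exact_mor P (canon_map v)) /\
  forall i' : 'cV[int]_n -> 'cV[nat]_d,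
    monoid_mor P i' -> exact_mor P i' ->
    exists j : 'cV[nat]_d -> 'cV[nat]_d,
      [/\ free_mor j,
          (forall p, P p -> i' p = j (canon_map v p)) &
          forall j' : 'cV[nat]_d -> 'cV[nat]_d, free_mor j' ->
            (forall p, P p -> i' p = j' (canon_map v p)) -> j' =1 j].
Proof.
have v_cut := first_lattice_points_cut_out HP Hv Hall.
split; first by split; [exact: canon_map_monoid_mor | exact: canon_map_exact].
move=> i' i'_mor i'_exact.
have [W [i'W W_cut]] := exact_cut_out HP i'_mor i'_exact.
have [tau [N WE]] := cut_out_first_lattice_points Hinj Hv W_cut.
have factorsE j : (forall p, P p -> i' p = j (canon_map v p)) <->
    (forall p, P p -> forall m, (j (canon_map v p) m 0)%:Z = ip (W m) p).
  split=> [j_fac p Pp m | j_fac p Pp]; first by rewrite -j_fac // i'W.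
  by apply/matrixP => m i; rewrite (ord1 i); apply/eqP; rewrite -eqz_nat i'W // j_fac.
exists (free_map tau N); split; first exact: free_map_mor.
  by apply/factorsE; apply: free_map_factor => // m; case: (WE m).
by move=> j' j'_mor /factorsE; apply: free_map_unique.
Qed.
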